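(* For all integers $d\ge 1$ and $1\le p_1\le\cdots\le p_d\le n$ we have $$W_n(p_1,\ldots,p_d)=n^d-q_n(p_1,\ldots,p_d).$$ In particular, for $d=2$ and $1\le p\le q\le n$, $W_n(p,q)=n^2-(n-p+1)^2+(q-p)^2$.
   Context: A $d$-uniform $d$-partite hypergraph $H$ has vertex classes $V_1,\ldots,V_d$ and its edges are $d$-sets containing exactly one vertex from each $V_i$; only such $d$-sets are ever considered as possible edges. $K^d_{p_1,\ldots,p_d}$ is the complete $d$-uniform $d$-partite hypergraph with class sizes $p_1,\ldots,p_d$. A copy of $K^d_{p_1,\ldots,p_d}$ in $H$ is a choice of a permutation $\pi:[d]\to[d]$ and sets $S_i\subseteq V_i$ with $|S_i|=p_{\pi(i)}$ such that every $d$-set with one vertex from each $S_i$ is an edge of $H$ (the class sizes may appear in any order across $V_1,\ldots,V_d$). $H$ is weakly $K^d_{p_1,\ldots,p_d}$-saturated if all $d$-sets with one vertex from each $V_i$ that are not edges of $H$ can be added to $H$ one at a time, in some order, so that each added edge creates a new copy of $K^d_{p_1,\ldots,p_d}$ (i.e., one containing the added edge). $W_n(p_1,\ldots,p_d)$ is the minimum number of edges of a weakly $K^d_{p_1,\ldots,p_d}$-saturated $d$-uniform $d$-partite hypergraph with $n$ vertices in each class. For $x\in[n]^d$, $x_{(i)}$ denotes the $i$-th smallest entry of $x$ when sorted with repetitions; $q_n(p_1,\ldots,p_d)$ is the number of $x\in[n]^d$ with $x_{(i)}\ge p_i$ for all $1\le i\le d$. *)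

From mathcomp Require Import all_boot all_order all_fingroup.
Set Implicit Arguments. Unset Strict Implicit. Unset Printing Implicit Defensive.

(* Vertex class V_i (i : 'I_d) is a copy of 'I_n = {0,...,n-1} (representing [n]).
   A possible edge (a d-set with one vertex in each class) is a function
   x : 'I_d -> 'I_n, x i being the vertex chosen in V_i. *)
Definition edge (d n : nat) := {ffun 'I_d -> 'I_n}.

Definition hgraph (d n : nat) := {set edge d n}.

Definition copy_containing (d n : nat) (p : 'I_d -> nat) (G : hgraph d n)
  (e : edge d n) : Prop :=
  exists (pi : {perm 'I_d}) (S : 'I_d -> {set 'I_n}),
    [/\ forall i, #|S i| = p (pi i),
        forall i, e i \in S i
      & forall x : edge d n, (forall i, x i \in S i) -> x \in G].

Definition weakly_saturated (d n : nat) (p : 'I_d -> nat) (H : hgraph d n) : Prop :=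
  exists s : seq (edge d n),
    [/\ uniq s,
        forall x, (x \in s) = (x \notin H)
      & forall (s1 s2 : seq (edge d n)) (e : edge d n), s = s1 ++ e :: s2 ->
          copy_containing p (H :|: [set y in rcons s1 e]) e].

Definition is_W (d n : nat) (p : 'I_d -> nat) (w : nat) : Prop :=
  (exists H : hgraph d n, weakly_saturated p H /\ #|H| = w) /\
  (forall H : hgraph d n, weakly_saturated p H -> w <= #|H|).

(* Entries of x viewed in [n] (shift by one), sorted nondecreasingly;
   x_(i) (1-based i) is nth 0 (sorted_entries x) (i-1). *)
Definition sorted_entries (d n : nat) (x : edge d n) : seq nat :=
  sort leq [seq (x i).+1 | i <- enum 'I_d].

Definition qn (d n : nat) (p : 'I_d -> nat) : nat :=
  #|[set x : edge d n | [forall i : 'I_d, p i <= nth 0 (sorted_entries x) i]]|.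

From mathcomp Require Import all_boot all_order all_fingroup all_algebra.
From mathcomp Require Import zify.
Set Implicit Arguments. Unset Strict Implicit. Unset Printing Implicit Defensive.
Import GRing.Theory Num.Theory.

(* For nondecreasing p, an edge x is counted by q_n exactly when it is dominated by p, i.e.
   p_(pi i) <= x_i for some permutation pi; so the claim is W_n = #undominated edges.

   Upper bound: the undominated edges form a weakly saturated graph.  Add the dominated edges
   in order of increasing weight sum_i x_i; a dominated edge e with witness pi spans the copy
   with boxes S_i = {e_i} u {v : v < p_(pi i)}, and every other edge of that copy is either
   undominated or coordinatewise below e, hence already present.

   Lower bound (polynomial method): to a copy with boxes S_i attach the functional
   f |-> sum_(x in prod S_i) prod_i w_(S_i)(x_i) f(x), where w_S are the weights of Lagrange
   interpolation on S; on a product prod_i g_i(x_i) it factors, and the i-th factor vanishes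
   as soon as deg g_i < |S_i| - 1.
   For an undominated J some J_i < p_(pi i), so the falling-factorial monomial
   x |-> prod_i (x_i - 1) ... (x_i - J_i + 1), of degree J_i - 1 < |S_i| - 1 in x_i, is killed
   by all copies.  Along the
   saturation sequence each new edge is the only point of its copy outside the current graph,
   so a combination of these monomials vanishing on a weakly saturated H vanishes everywhere.
   The monomials are triangular with respect to the coordinatewise order, hence independent,
   and therefore |H| >= number of undominated edges. *)

Lemma sorted_nth_leq_count (s : seq nat) k v :
  sorted leq s -> k < count (leq^~ v) s -> nth 0 s k <= v.
Proof.
move=> s_sorted k_lt; rewrite leqNgt; apply/negP => v_lt; move: k_lt.
rewrite -(cat_take_drop k s) count_cat.
have -> : count (leq^~ v) (drop k s) = 0.
  apply/eqP; rewrite -leqn0 leqNgt -has_count; apply/(has_nthP 0) => -[j].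
  rewrite size_drop nth_drop => j_lt.
  have [k_lt k_j_lt] : k < size s /\ k + j < size s by lia.
  have := sorted_leq_nth leq_trans leqnn 0 s_sorted.
  by move=> /(_ k (k + j)); rewrite !inE k_lt k_j_lt leq_addr; lia.
by rewrite addn0 ltnNge (leq_trans (count_size _ _)) // size_take; case: ltnP.
Qed.

Lemma sorted_leq_nth_count (s : seq nat) k v : sorted leq s -> k < size s ->
  size s - k <= count (leq v) s -> v <= nth 0 s k.
Proof.
move=> s_sorted k_lt count_ge; rewrite leqNgt; apply/negP => nth_lt.
move: count_ge; rewrite -(cat_take_drop k.+1 s) count_cat.
have -> : count (leq v) (take k.+1 s) = 0.
  apply/eqP; rewrite -leqn0 leqNgt -has_count; apply/(has_nthP 0) => -[j].
  rewrite size_take => j_lt.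
  have j_le : j <= k by move: j_lt; case: ifP => [_|/negbT]; lia.
  rewrite nth_take //.
  have := sorted_leq_nth leq_trans leqnn 0 s_sorted => /(_ j k).
  by rewrite !inE k_lt (leq_ltn_trans j_le k_lt) => /(_ isT isT j_le); lia.
rewrite add0n cat_take_drop.
by have := count_size (leq v) (drop k.+1 s); rewrite size_drop; lia.
Qed.

Lemma card_ord_lt n k : k <= n -> #|[set v : 'I_n | v < k]| = k.
Proof.
move=> le_kn; have widen_inj : injective (widen_ord le_kn).
  by move=> a b /(congr1 val) /= /val_inj.
rewrite -[RHS]card_ord -(card_imset _ widen_inj).
apply: eq_card => v; rewrite inE; apply/idP/imsetP => [v_lt | [w _ ->]].
  by exists (Ordinal v_lt) => //; apply: val_inj.
exact: (ltn_ord w).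
Qed.

Lemma card_ord_range n a b : a <= b <= n -> #|[set v : 'I_n | a <= v < b]| = b - a.
Proof.
case/andP=> le_ab le_bn.
have -> : [set v : 'I_n | a <= v < b] =
    [set v : 'I_n | v < b] :\: [set v : 'I_n | v < a].
  by apply/setP => v; rewrite !inE -leqNgt.
rewrite cardsD (setIidPr _) ?card_ord_lt ?(leq_trans le_ab) //.
by apply/subsetP => v; rewrite !inE => /leq_trans; apply.
Qed.

Section Rank.
Variables (T : finType) (f : T -> nat).
Hypothesis f_inj : injective f.

Definition rank (t : T) : nat := #|[set u | f u < f t]|.

Lemma rank_lt_card t : rank t < #|T|.
Proof.
rewrite /rank -cardsT; apply: proper_card; apply/properP; split; first exact: subsetT.
by exists t; rewrite ?inE ?ltnn.
Qed.

Lemma rank_inj : injective rank.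
Proof.
have rank_lt u t : f u < f t -> rank u < rank t.
  move=> lt_ut; apply: proper_card; apply/properP; split.
    by apply/subsetP => w; rewrite !inE => /ltn_trans; apply.
  by exists u; rewrite !inE ?ltnn.
move=> u t eq_rank; apply: f_inj.
by case: (ltngtP (f u) (f t)) => // /rank_lt; rewrite eq_rank ltnn.
Qed.

Lemma card_leq_rank t : #|[set u | f u <= f t]| = (rank t).+1.
Proof.
have := cardsU1 t [set u | f u < f t]; rewrite inE ltnn add1n => <-.
by apply: eq_card => u; rewrite !inE leq_eqVlt (inj_eq f_inj).
Qed.

End Rank.

Section RankOrd.
Variables (d : nat) (f : 'I_d -> nat).
Hypothesis f_inj : injective f.

Lemma rank_ltn i : rank f i < d.
Proof. by have := rank_lt_card f i; rewrite card_ord. Qed.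

Definition rank_ord i : 'I_d := Ordinal (rank_ltn i).

Lemma rank_ord_inj : injective rank_ord.
Proof. by move=> i j /(congr1 val) /(rank_inj f_inj). Qed.

End RankOrd.

Section Dominance.
Variables (d n : nat) (p : 'I_d -> nat).

(* Vertex v : 'I_n stands for v + 1 in [n]. *)
Definition dominates (x : edge d n) : bool :=
  [exists pi : {perm 'I_d}, [forall i, p (pi i) <= (x i).+1]].

Lemma size_sorted_entries (x : edge d n) : size (sorted_entries x) = d.
Proof. by rewrite size_sort size_map size_enum_ord. Qed.

Lemma sorted_entries_sorted (x : edge d n) : sorted leq (sorted_entries x).
Proof. exact: (sort_sorted leq_total). Qed.

Lemma count_sorted_entries (x : edge d n) (a : pred nat) :
  count a (sorted_entries x) = #|[set i | a (x i).+1]|.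
Proof.
rewrite (seq.permP (permEl (perm_sort _ _))) count_map cardE /enum_mem size_filter.
by rewrite filter_predT; apply: eq_count => i; rewrite /= inE.
Qed.

(* Orders the coordinates of x by value, ties broken by index. *)
Definition entry_key (x : edge d n) (i : 'I_d) : nat := x i * d + i.

Lemma entry_key_inj x : injective (entry_key x).
Proof.
move=> i j eq_key; apply: val_inj.
have := congr1 (modn^~ d) eq_key; rewrite /entry_key !modnMDl !modn_small //.
Qed.

Lemma entry_key_leq x i j : entry_key x j <= entry_key x i -> x j <= x i.
Proof.
move=> key_le; rewrite leqNgt; apply/negP => lt_ij; move: key_le.
by have := leq_mul lt_ij (leqnn d); rewrite mulSn /entry_key; have := ltn_ord i; lia.
Qed.

Lemma dominates_sorted_entries x :
  [forall i, p i <= nth 0 (sorted_entries x) i] -> dominates x.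
Proof.
move/forallP=> p_le; apply/existsP; exists (perm (rank_ord_inj (@entry_key_inj x))).
apply/forallP => i; rewrite permE; apply: leq_trans (p_le _) _.
apply: sorted_nth_leq_count; first exact: sorted_entries_sorted.
rewrite count_sorted_entries /= -(card_leq_rank (@entry_key_inj x)).
apply: subset_leq_card.
by apply/subsetP => j; rewrite !inE ltnS => /entry_key_leq.
Qed.

Hypothesis p_mono : forall i j : 'I_d, i <= j -> p i <= p j.

Lemma sorted_entries_dominates x :
  dominates x -> [forall i, p i <= nth 0 (sorted_entries x) i].
Proof.
case/existsP=> pi /forallP p_le; apply/forallP => k.
apply: sorted_leq_nth_count; rewrite ?size_sorted_entries //.
  exact: sorted_entries_sorted.
have k_le : k <= d <= d by rewrite leqnn andbT ltnW.
rewrite count_sorted_entries -(card_ord_range k_le).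
rewrite -(card_preimset _ (@perm_inj _ pi)); apply: subset_leq_card.
by apply/subsetP => i; rewrite !inE ltn_ord andbT => /p_mono /leq_trans; apply.
Qed.

Lemma qn_dominates : qn n p = #|[set x : edge d n | dominates x]|.
Proof.
apply: eq_card => x; rewrite !inE.
by apply/idP/idP => [/dominates_sorted_entries | /sorted_entries_dominates].
Qed.

End Dominance.

Section LagrangeWeights.
Local Open Scope ring_scope.
Variables (F : fieldType) (T : finType) (a : T -> F).
Hypothesis a_inj : injective a.
Implicit Types (S : {set T}) (t u : T) (P : {poly F}).

Definition lagrange_basis S t : {poly F} :=
  \prod_(u <- enum S | u != t) ('X - (a u)%:P).

Definition lagrange_weight S t : F := (lagrange_basis S t).[a t]^-1.

Lemma horner_lagrange_basis_neq0 S t : (lagrange_basis S t).[a t] != 0.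
Proof.
rewrite horner_prod prodf_seq_neq0; apply/allP => u _; apply/implyP => ne_ut.
by rewrite hornerXsubC subr_eq0 (inj_eq a_inj) eq_sym.
Qed.

Lemma lagrange_weight_neq0 S t : lagrange_weight S t != 0.
Proof. by rewrite invr_eq0 horner_lagrange_basis_neq0. Qed.

Lemma horner_lagrange_basis_eq0 S t u :
  u \in S -> u != t -> (lagrange_basis S t).[a u] = 0.
Proof.
move=> uS ne_ut; rewrite horner_prod -big_filter (bigD1_seq u) /=.
- by rewrite hornerXsubC subrr mul0r.
- by rewrite mem_filter ne_ut mem_enum.
- by rewrite filter_uniq ?enum_uniq.
Qed.

Lemma size_lagrange_basis S t : t \in S -> size (lagrange_basis S t) = #|S|.
Proof.
move=> tS; rewrite /lagrange_basis -big_filter size_prod_XsubC size_filter cardE.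
by rewrite -(count_predC (pred1 t)) count_uniq_mem ?enum_uniq // mem_enum tS add1n.
Qed.

Lemma coef_lagrange_basis S t : t \in S -> (lagrange_basis S t)`_#|S|.-1 = 1.
Proof.
move=> tS; have /monicP := monic_prod_XsubC (enum S) (predC1 t) a.
by rewrite -/(lagrange_basis S t) lead_coefE size_lagrange_basis.
Qed.

Lemma lagrange_interpolation S P : (size P <= #|S|)%N ->
  P = \sum_(t in S) (lagrange_weight S t * P.[a t]) *: lagrange_basis S t.
Proof.
move=> size_P; apply/eqP; rewrite -subr_eq0; apply/eqP.
apply: (@roots_geq_poly_eq0 _ _ [seq a t | t <- enum S]).
- apply/allP => z /mapP [u]; rewrite mem_enum => uS ->.
  rewrite rootE hornerD hornerN horner_sum (bigD1 u) //= big1 => [|t /andP [_ ne_tu]].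
    by rewrite hornerZ mulrAC mulVf ?horner_lagrange_basis_neq0 // mul1r addr0 subrr.
  by rewrite hornerZ horner_lagrange_basis_eq0 ?mulr0 // eq_sym.
- by rewrite map_inj_uniq ?enum_uniq.
rewrite size_map -cardE (leq_trans (size_polyD _ _)) // size_polyN geq_max size_P.
rewrite (leq_trans (size_sum _ _ _)) //; apply/bigmax_leqP => t tS.
by rewrite (leq_trans (size_scale_leq _ _)) ?size_lagrange_basis.
Qed.

Lemma sum_lagrange_weight_eq0 S P : (size P < #|S|)%N ->
  \sum_(t in S) lagrange_weight S t * P.[a t] = 0.
Proof.
move=> size_P; have := lagrange_interpolation (ltnW size_P).
move/(congr1 (fun Q : {poly F} => Q`_#|S|.-1)).
rewrite /= nth_default; last by move: size_P; case: #|S|.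
rewrite coef_sum => coef_eq0; rewrite [RHS]coef_eq0; apply: eq_bigr => t tS.
by rewrite coefZ coef_lagrange_basis ?mulr1.
Qed.

End LagrangeWeights.

Section FreeFamily.
Local Open Scope ring_scope.

Lemma card_leq_free (F : fieldType) (T U : finType) (A : {set T}) (B : {set U})
    (f : T -> U -> F) :
  (forall c : T -> F, {in B, forall y, \sum_(t in A) c t * f t y = 0} ->
     {in A, forall t, c t = 0}) ->
  (#|A| <= #|B|)%N.
Proof.
move=> free_f; have [->//|/card_gt0P [t0 t0A]] := posnP #|A|.
pose M : 'M[F]_(#|A|, #|B|) := \matrix_(i, j) f (enum_val i) (enum_val j).
suff /eqP <- : row_free M by apply: rank_leq_col.
rewrite -kermx_eq0; apply/rowV0P => u; rewrite sub_kermx => /eqP uM0.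
apply/rowP => i; rewrite mxE -[i](enum_valK_in t0A).
apply: (free_f (fun t => u 0 (enum_rank_in t0A t))) (enum_valP i) => y yB.
have := congr1 (fun v : 'rV_#|B| => v 0 (enum_rank_in yB y)) uM0.
rewrite !mxE => sum_eq0; rewrite big_enum_val -[RHS]sum_eq0; apply: eq_bigr => j _.
by rewrite enum_valK_in mxE enum_rankK_in.
Qed.

End FreeFamily.

Section FallingPoly.
Local Open Scope ring_scope.

Definition falling_poly (R : nzRingType) (j : nat) : {poly R} :=
  \prod_(l < j) ('X - l%:R%:P).

Lemma size_falling_poly (R : nzRingType) j : size (falling_poly R j) = j.+1.
Proof. by rewrite size_prod_XsubC /index_enum; unlock; rewrite -enumT size_enum_ord. Qed.

Lemma horner_falling_poly (R : comNzRingType) j m :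
  (falling_poly R j).[m%:R] = (m ^_ j)%:R.
Proof.
rewrite horner_prod; case: (leqP j m) => [le_jm | lt_mj].
  rewrite ffact_prod natr_prod; apply: eq_bigr => i _.
  by rewrite hornerXsubC natrB // (leq_trans (ltnW (ltn_ord i))).
by rewrite ffact_small // (bigD1 (Ordinal lt_mj)) //= hornerXsubC subrr mul0r.
Qed.

End FallingPoly.
Arguments falling_poly {R}.

Section Weight.
Variables (d n : nat).

Definition weight (J : edge d n) : nat := \sum_i J i.

Lemma weight_lt (J K : edge d n) :
  (forall i, J i <= K i) -> J != K -> weight J < weight K.
Proof.
move=> le_JK ne_JK; have [i0 ne_i0] : exists i0, J i0 != K i0.
  apply/existsP; apply: contraNT ne_JK => /existsPn eq_JK.
  by apply/eqP/ffunP => i; apply/eqP/negPn/eq_JK.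
rewrite /weight (bigD1 i0) // [X in _ < X](bigD1 i0) //= -addSn.
by rewrite leq_add ?leq_sum // ltn_neqAle le_JK andbT.
Qed.

End Weight.

Section LowerBound.
Local Open Scope ring_scope.
Variables (d n : nat) (p : 'I_d -> nat).
Implicit Types (J x e : edge d n) (S : 'I_d -> {set 'I_n}) (f : edge d n -> rat).

Definition node (v : 'I_n) : rat := (v : nat)%:R.

Lemma node_inj : injective node.
Proof. by move=> v w /eqP; rewrite eqr_nat => /eqP /val_inj. Qed.

Definition falling_monomial J x : rat := (\prod_i (x i) ^_ (J i))%:R.

Lemma falling_monomial_eq0 J x :
  (falling_monomial J x == 0) = ~~ [forall i, (J i <= x i)%N].
Proof.
rewrite pnatr_eq0 -[LHS]negbK -lt0n; congr (~~ _).
apply/idP/forallP => [/gt0_prodn le_Jx i | le_Jx].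
  by rewrite -ffact_gt0 le_Jx.
by apply: prodn_gt0 => i; rewrite ffact_gt0.
Qed.

Definition box_sum S f : rat :=
  \sum_(x in family S) (\prod_i lagrange_weight node (S i) (x i)) * f x.

Definition copy_orthogonal f : Prop :=
  forall (pi : {perm 'I_d}) S, (forall i, #|S i| = p (pi i)) -> box_sum S f = 0.

Lemma falling_monomial_copy_orthogonal J :
  ~~ dominates p J -> copy_orthogonal (falling_monomial J).
Proof.
move=> not_dom pi S card_S; have [i0 lt_J_p] : exists i0, ((J i0).+1 < p (pi i0))%N.
  move: not_dom; rewrite negb_exists => /forallP /(_ pi); rewrite negb_forall.
  by case/existsP => i; rewrite -ltnNge; exists i.
have -> : box_sum S (falling_monomial J) =
    \prod_i \sum_(v in S i)
      lagrange_weight node (S i) v * (falling_poly (J i)).[node v].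
  rewrite bigA_distr_big_dep; apply: eq_bigr => x _.
  rewrite /falling_monomial natr_prod -big_split; apply: eq_bigr => i _.
  by rewrite horner_falling_poly.
rewrite (bigD1 i0) //= sum_lagrange_weight_eq0 ?mul0r //; first exact: node_inj.
by rewrite size_falling_poly card_S.
Qed.

Lemma box_sum_lincomb S (I : finType) (A : {set I}) (c : I -> rat)
    (g : I -> edge d n -> rat) :
  box_sum S (fun x => \sum_(j in A) c j * g j x) = \sum_(j in A) c j * box_sum S (g j).
Proof.
rewrite /box_sum; under eq_bigr => x _ do rewrite mulr_sumr.
rewrite exchange_big /=; apply: eq_bigr => j _; rewrite mulr_sumr.
by apply: eq_bigr => x _; rewrite mulrCA.
Qed.

Lemma box_sum_eq0_single S f e : e \in family S ->
  {in family S, forall x, x != e -> f x = 0} -> box_sum S f = 0 -> f e = 0.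
Proof.
move=> eS f_eq0; rewrite /box_sum (bigD1 e) //= [X in _ + X]big1 ?addr0;
  last by move=> x /andP [xS ne_xe]; rewrite f_eq0 ?mulr0.
move/eqP; rewrite mulf_eq0 prodf_seq_eq0 => /orP [/hasP [i _ /=]|/eqP //].
by rewrite (negbTE (lagrange_weight_neq0 node_inj _ _)).
Qed.

Lemma saturated_vanish (H : hgraph d n) f :
  weakly_saturated p H -> copy_orthogonal f ->
  {in H, forall x, f x = 0} -> forall x, f x = 0.
Proof.
move=> [s [_ mem_s copy_s]] orth_f f_H.
have f_prefix t u : t ++ u = s -> {in t, forall x, f x = 0}.
  elim/last_ind: t u => [//|t e IHt] u; rewrite cat_rcons => def_s.
  have f_t := IHt _ def_s.
  have [pi [S [card_S eS box_S]]] := copy_s _ _ _ (esym def_s).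
  have f_e : f e = 0.
    apply: (box_sum_eq0_single (S := S)); first exact/familyP.
      move=> x /familyP /box_S; rewrite !inE mem_rcons inE => /orP [/f_H -> //|].
      by case/predU1P => [-> /eqP //| /f_t].
    exact: orth_f card_S.
  by move=> x; rewrite mem_rcons inE => /predU1P [-> | /f_t].
move=> x; case xH: (x \in H); first exact: f_H.
by apply: (f_prefix s [::]); rewrite ?cats0 // mem_s xH.
Qed.

Lemma falling_monomial_free (A : {set edge d n}) (c : edge d n -> rat) :
  (forall x, \sum_(J in A) c J * falling_monomial J x = 0) -> {in A, forall J, c J = 0}.
Proof.
move=> comb_eq0 J0 J0A; apply/eqP/negPn/negP => cJ0.
have [J /andP [JA cJ] J_min] := arg_minnP (P := fun J => (J \in A) && (c J != 0))
  (@weight d n) (introT andP (conj J0A cJ0)).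
have := comb_eq0 J; rewrite (bigD1 J) //= big1 ?addr0 => [/eqP|K /andP [KA ne_KJ]].
  by rewrite mulf_eq0 (negbTE cJ) falling_monomial_eq0 => /forallPn [i]; rewrite leqnn.
have [->|cK] := eqVneq (c K) 0; first by rewrite mul0r.
have not_le : ~~ [forall i, (K i <= J i)%N].
  apply/negP => /forallP le_KJ; have := J_min K; rewrite KA cK => /(_ isT).
  by rewrite leqNgt weight_lt.
by apply/eqP; rewrite mulf_eq0 falling_monomial_eq0 not_le orbT.
Qed.

Definition undominated : hgraph d n := [set x | ~~ dominates p x].

Lemma card_undominated_leq (H : hgraph d n) :
  weakly_saturated p H -> (#|undominated| <= #|H|)%N.
Proof.
move=> sat_H; apply: (card_leq_free (f := falling_monomial)) => c c_H.
apply: falling_monomial_free; apply: (saturated_vanish sat_H) => [pi S card_S|//].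
rewrite box_sum_lincomb big1 // => J; rewrite inE => /falling_monomial_copy_orthogonal.
by move=> /(_ pi S card_S) ->; rewrite mulr0.
Qed.

End LowerBound.

Lemma sorted_mem_prefix (T : eqType) (f : T -> nat) s1 e s2 x :
  sorted (relpre f leq) (s1 ++ e :: s2) -> x \in s1 ++ e :: s2 -> f x < f e -> x \in s1.
Proof.
move=> sorted_s; rewrite mem_cat in_cons => /or3P [//|/eqP ->|x_s2].
  by rewrite ltnn.
have f_trans : transitive (relpre f leq) by move=> b a c /= /leq_trans; apply.
have [_ /(order_path_min f_trans) /allP /(_ x x_s2)] := cat_sorted2 sorted_s.
by rewrite /= leqNgt => /negbTE ->.
Qed.

Section UpperBound.
Variables (d n : nat) (p : 'I_d -> nat).
Hypothesis p_range : forall i, 1 <= p i <= n.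

Lemma undominated_saturated : weakly_saturated p (undominated n p).
Proof.
pose s := sort (relpre (@weight d n) leq) (enum [set x : edge d n | dominates p x]).
have sorted_s : sorted (relpre (@weight d n) leq) s.
  by apply: sort_sorted => x y; apply: leq_total.
exists s; split; first by rewrite sort_uniq enum_uniq.
  by move=> x; rewrite mem_sort mem_enum !inE negbK.
move=> s1 s2 e def_s.
have : e \in s by rewrite def_s mem_cat mem_head orbT.
rewrite mem_sort mem_enum inE => /existsP [pi /forallP p_le_e].
exists pi, (fun i => e i |: [set v : 'I_n | (v : nat).+1 < p (pi i)]); split.
- move=> i; have [p_ge1 p_le] := andP (p_range (pi i)).
  have -> : [set v : 'I_n | (v : nat).+1 < p (pi i)] =
      [set v : 'I_n | v < (p (pi i)).-1].
    by apply/setP => v; rewrite !inE; lia.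
  rewrite cardsU1 card_ord_lt ?inE; last lia.
  by have := p_le_e i; lia.
- by move=> i; rewrite setU11.
move=> x x_box; rewrite !inE mem_rcons in_cons.
have [-> | ne_xe] := eqVneq x e; rewrite ?eqxx ?orbT //=.
case dom_x: (dominates p x) => //=.
apply: (sorted_mem_prefix (f := @weight d n) (s2 := s2) (e := e)).
- by rewrite -def_s.
- by rewrite -def_s mem_sort mem_enum inE.
apply: weight_lt => // i; have := x_box i; rewrite !inE => /predU1P [-> //|].
by have := p_le_e i; lia.
Qed.

End UpperBound.

Lemma card_undominated d n (p : 'I_d -> nat) :
  (forall i j : 'I_d, i <= j -> p i <= p j) -> #|undominated n p| = n ^ d - qn n p.
Proof.
move=> p_mono; have card_edges : #|edge d n| = n ^ d by rewrite card_ffun !card_ord.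
rewrite (qn_dominates n p_mono) -card_edges -(cardsC [set x | dominates p x]) addKn.
by apply: eq_card => x; rewrite !inE.
Qed.

Lemma is_W_qn d n (p : 'I_d -> nat) : (forall i, 1 <= p i <= n) ->
  (forall i j : 'I_d, i <= j -> p i <= p j) -> is_W n p (n ^ d - qn n p).
Proof.
move=> p_range p_mono; rewrite -card_undominated //; split.
  by exists (undominated n p); split; last by []; apply: undominated_saturated.
exact: card_undominated_leq.
Qed.

Lemma ord2P (i : 'I_2) : i = ord0 \/ i = ord_max.
Proof. by case: i => [[|[|]]] //= lt_i2; [left | right]; apply: val_inj. Qed.

Lemma sorted_entries_pair n (x : edge 2 n) :
  sorted_entries x =
    [:: minn (x ord0).+1 (x ord_max).+1; maxn (x ord0).+1 (x ord_max).+1].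
Proof.
apply: (sorted_eq leq_trans anti_leq); first exact: sorted_entries_sorted.
  by rewrite /= andbT geq_min leq_maxl.
rewrite perm_sort !enum_ordSl enum_ord0 /=.
have -> : lift ord0 (@ord0 0) = ord_max by apply: val_inj.
by case: leqP => _; rewrite // (perm_catC [:: _] [:: _]).
Qed.

Section PairCase.
Variables (n p q : nat).
Hypotheses (p_ge1 : 1 <= p) (p_le_q : p <= q) (q_le_n : q <= n).

Definition pair_sizes (i : 'I_2) : nat := if val i == 0 then p else q.

Lemma card_ffun_on_pair (R : {set 'I_n}) :
  #|[set x : edge 2 n | x \in ffun_on R]| = #|R| ^ 2.
Proof. by rewrite cardsE card_ffun_on card_ord. Qed.

Lemma qn_pair : qn n pair_sizes = (n - p + 1) ^ 2 - (q - p) ^ 2.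
Proof.
pose A := [set v : 'I_n | p.-1 <= v < n]; pose B := [set v : 'I_n | p.-1 <= v < q.-1].
have on_pair R (x : edge 2 n) : (x \in ffun_on R) = (x ord0 \in R) && (x ord_max \in R).
  apply/ffun_onP/andP => [on_R | [x0R x1R] i]; first by split; apply: on_R.
  by case: (ord2P i) => ->.
rewrite /qn.
have -> : [set x : edge 2 n | [forall i, pair_sizes i <= nth 0 (sorted_entries x) i]] =
    [set x | x \in ffun_on A] :\: [set x | x \in ffun_on B].
  apply/setP => x; rewrite in_setD !in_set !on_pair /A /B !inE !ltn_ord !andbT.
  rewrite sorted_entries_pair; apply/forallP/idP => [p_le | x_in i].
    by have := p_le ord0; have := p_le ord_max; rewrite /pair_sizes /=; lia.
  by case: (ord2P i) => -> /=; rewrite /pair_sizes /=; move: x_in; lia.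
rewrite cardsD (setIidPr _); last first.
  by apply/subsetP => x; rewrite !in_set !on_pair /A /B !inE; lia.
have card_A : #|A| = n - p + 1 by rewrite card_ord_range; lia.
have card_B : #|B| = q - p by rewrite card_ord_range; lia.
by rewrite !card_ffun_on_pair card_A card_B.
Qed.

Lemma is_W_pair : is_W n pair_sizes (n ^ 2 - (n - p + 1) ^ 2 + (q - p) ^ 2).
Proof.
have sizes_range i : 1 <= pair_sizes i <= n by rewrite /pair_sizes; case: ifP; lia.
have sizes_mono (i j : 'I_2) : i <= j -> pair_sizes i <= pair_sizes j.
  by case: (ord2P i) => ->; case: (ord2P j) => -> //=; rewrite /pair_sizes /=; lia.
have le1 : (q - p) ^ 2 <= (n - p + 1) ^ 2 by rewrite leq_exp2r //; lia.
have le2 : (n - p + 1) ^ 2 <= n ^ 2 by rewrite leq_exp2r //; lia.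
rewrite addnBAC // -subnBA // -qn_pair.
exact: is_W_qn.
Qed.

End PairCase.

Theorem theorem2 :
  (forall (d n : nat) (p : 'I_d -> nat),
     1 <= d ->
     (forall i : 'I_d, 1 <= p i <= n) ->
     (forall i j : 'I_d, i <= j -> p i <= p j) ->
     @is_W d n p (n ^ d - @qn d n p))
  /\
  (forall (n p q : nat), 1 <= p -> p <= q -> q <= n ->
     @is_W 2 n (fun i : 'I_2 => if val i == 0 then p else q)
          (n ^ 2 - (n - p + 1) ^ 2 + (q - p) ^ 2)).
Proof.
split; first by move=> d n p _; apply: is_W_qn.
exact: is_W_pair.
Qed.
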